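(* Let $a=\log_2 3$. For integers $K\ge 1$ and $1\le\ell\le K$ define $g_K(\ell)=\max(0,\,a-K/\ell)$, let $S^+(K)=\{1\le\ell\le K: g_K(\ell)>0\}$, and define $\Theta_K=\max_{\ell\in S^+(K)}g_K(\ell)\,/\,\min_{\ell\in S^+(K)}g_K(\ell)$. Then: (1) $\max_{S^+(K)}g_K=a-1$, attained at $\ell=K$, and $\min_{S^+(K)}g_K=a-K/\ell_*(K)$ with $\ell_*(K)=\lfloor K/a\rfloor+1$. (2) Writing $K/a=\lfloor K/a\rfloor+r_K$ with $r_K\in(0,1)$, $$\Theta_K=\frac{a-1}{a}\cdot\frac{\lfloor K/a\rfloor+1}{1-r_K}.$$ (3) The sequence $(\Theta_K)$ is unbounded; along the numerators of the even-indexed convergents of the continued fraction of $\log_2 3$, $K\in\{3,19,84,1054,50508,176251,\ldots\}$, one has $r_K\to 1^-$ and $\Theta_K\to\infty$. *)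

From Stdlib Require Import Reals Lra Lia ZArith Arith List.
From Stdlib Require Export RList.
Open Scope R_scope.

Definition a : R := ln 3 / ln 2.

Definition g (K l : nat) : R := Rmax 0 (a - INR K / INR l).

Definition Splus (K : nat) : list nat :=
  filter (fun l => if Rlt_dec 0 (g K l) then true else false) (seq 1 K).

Definition gmax (K : nat) : R := MaxRlist (map (g K) (Splus K)).
Definition gmin (K : nat) : R := MinRlist (map (g K) (Splus K)).

Definition Theta (K : nat) : R := gmax K / gmin K.

Definition flr (K : nat) : Z := Int_part (INR K / a).
Definition rK (K : nat) : R := frac_part (INR K / a).

Definition lstar (K : nat) : nat := (Z.to_nat (flr K) + 1)%nat.

(* Regular continued fraction of a: complete quotients x_0 = a,
   x_{n+1} = 1/(x_n - floor x_n); partial quotients a_n = floor x_n. *)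
Fixpoint cf_rem (n : nat) : R :=
  match n with
  | O => a
  | S m => / (cf_rem m - IZR (Int_part (cf_rem m)))
  end.
Definition cf_quot (n : nat) : Z := Int_part (cf_rem n).

(* (p_n, p_{n-1}) with p_{-1} = 1, p_{-2} = 0, p_n = a_n p_{n-1} + p_{n-2} *)
Fixpoint cf_num_pair (n : nat) : Z * Z :=
  match n with
  | O => (cf_quot 0, 1%Z)
  | S m => let (x, y) := cf_num_pair m in ((cf_quot (S m) * x + y)%Z, x)
  end.
Definition cf_num (n : nat) : Z := fst (cf_num_pair n).

(* Since 3^q is odd and 2^p even, a = log_2 3 is irrational, so K/a is never an integer.
   On 1 <= l <= K, g_K(l) = a - K/l is positive exactly when l > K/a, i.e. on the
   interval floor(K/a) + 1 <= l <= K, and it increases with l there; this gives the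
   extremes of g_K and the closed form of Theta_K, which is at least (a - 1) K / a^2.
   For the even convergents p_n/q_n of a one has 0 < a q_n - p_n < 1/q_n, hence for
   K = p_n the quotient K/a lies just below the integer q_n and r_K = 1 - (a q_n - p_n)/a. *)

From Stdlib Require Import Reals ZArith Arith List Lra Lia.
Open Scope R_scope.

Lemma a_gt_1 : 1 < a.
Proof.
  assert (H2 : 0 < ln 2) by (pose proof ln_lt_2; lra).
  assert (H3 : ln 2 < ln 3) by (apply ln_increasing; lra).
  unfold a; apply (Rmult_lt_reg_r (ln 2)); [lra|].
  unfold Rdiv; rewrite Rmult_assoc, Rinv_l; lra.
Qed.

Lemma pow3_neq_pow2 (p q : nat) : p <> 0%nat -> (3 ^ q <> 2 ^ p)%nat.
Proof.
  intros Hp E; apply (f_equal Nat.even) in E.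
  rewrite (Nat.even_pow 2) in E by exact Hp.
  destruct q as [|q]; [discriminate|].
  rewrite Nat.even_pow in E by discriminate; discriminate.
Qed.

Definition irrational (x : R) : Prop :=
  forall p q : Z, q <> 0%Z -> x * IZR q <> IZR p.

Lemma irrational_neq_0 x : irrational x -> x <> 0.
Proof. intros Hx E; apply (Hx 0%Z 1%Z); [discriminate | rewrite E; ring]. Qed.

Lemma irrational_minus_IZR x c : irrational x -> irrational (x - IZR c).
Proof.
  intros Hx p q Hq E; apply (Hx (p + c * q)%Z q Hq).
  rewrite plus_IZR, mult_IZR, <- E; ring.
Qed.

Lemma irrational_inv x : irrational x -> irrational (/ x).
Proof.
  intros Hx p q Hq E; pose proof (irrational_neq_0 x Hx) as Hx0.
  destruct (Z.eq_dec p 0) as [->|Hp].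
  - apply Rmult_integral in E as [E|E].
    + exact (Rinv_neq_0_compat x Hx0 E).
    + exact (Hq (eq_IZR_R0 q E)).
  - apply (Hx q p Hp); rewrite <- E; field; exact Hx0.
Qed.

Lemma a_mul_nat_neq_nat (p q : nat) : (0 < q)%nat -> a * INR q <> INR p.
Proof.
  intros Hq E; pose proof a_gt_1.
  assert (0 < INR q) by (apply lt_0_INR; exact Hq).
  assert (Hp : p <> 0%nat) by (intros ->; simpl in E; nra).
  apply (pow3_neq_pow2 p q Hp), INR_eq.
  rewrite !pow_INR; replace (INR 3) with 3 by (simpl; ring).
  replace (INR 2) with 2 by (simpl; ring).
  assert (H2 : 0 < ln 2) by (pose proof ln_lt_2; lra).
  apply ln_inv; try (apply pow_lt; lra).
  rewrite !ln_pow by lra.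
  unfold a in E; apply (Rmult_eq_reg_r (/ ln 2)); [|apply Rinv_neq_0_compat; lra].
  rewrite <- E; field; lra.
Qed.

Lemma irrational_a : irrational a.
Proof.
  assert (Hpos : forall p q : Z, (0 < q)%Z -> a * IZR q <> IZR p).
  { intros p q Hq E; pose proof a_gt_1.
    assert (0 < IZR q) by (apply IZR_lt; exact Hq).
    assert (Hp : (0 < p)%Z) by (apply lt_IZR; rewrite <- E; apply Rmult_lt_0_compat; lra).
    rewrite <- (Z2Nat.id q), <- (Z2Nat.id p), <- !INR_IZR_INZ in E by lia.
    revert E; apply a_mul_nat_neq_nat; lia. }
  intros p q Hq E; destruct (Z_lt_le_dec 0 q) as [Hl|Hl].
  - exact (Hpos p q Hl E).
  - apply (Hpos (- p)%Z (- q)%Z); [lia|]; rewrite !opp_IZR, <- E; ring.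
Qed.

Lemma irrational_cf_rem n : irrational (cf_rem n).
Proof.
  induction n as [|n IH]; [exact irrational_a|].
  exact (irrational_inv _ (irrational_minus_IZR _ _ IH)).
Qed.

Lemma cf_frac_bounds n : 0 < cf_rem n - IZR (cf_quot n) < 1.
Proof.
  pose proof (base_Int_part (cf_rem n)) as [H1 H2].
  pose proof (irrational_neq_0 _ (irrational_minus_IZR _ (cf_quot n) (irrational_cf_rem n))).
  unfold cf_quot in *; lra.
Qed.

Lemma cf_rem_gt_1 n : 1 < cf_rem (S n).
Proof.
  pose proof (cf_frac_bounds n) as [H0 H1].
  change (cf_rem (S n)) with (/ (cf_rem n - IZR (cf_quot n))).
  rewrite <- Rinv_1; apply Rinv_lt_contravar; nra.
Qed.

Lemma cf_quot_ge_1 n : 1 <= IZR (cf_quot (S n)).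
Proof.
  pose proof (cf_rem_gt_1 n); pose proof (base_Int_part (cf_rem (S n))) as [H1 H2].
  apply IZR_le; cut (0 < cf_quot (S n))%Z; [lia|].
  apply lt_IZR; unfold cf_quot; lra.
Qed.

Fixpoint cf_den_pair (n : nat) : Z * Z :=
  match n with
  | O => (1%Z, 0%Z)
  | S m => let (x, y) := cf_den_pair m in ((cf_quot (S m) * x + y)%Z, x)
  end.

Definition num (n : nat) : R := IZR (cf_num n).
Definition num_prev (n : nat) : R := IZR (snd (cf_num_pair n)).
Definition den (n : nat) : R := IZR (fst (cf_den_pair n)).
Definition den_prev (n : nat) : R := IZR (snd (cf_den_pair n)).

Lemma num_S n : num (S n) = IZR (cf_quot (S n)) * num n + num_prev n.
Proof.
  unfold num, num_prev, cf_num; simpl.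
  destruct (cf_num_pair n); simpl; rewrite plus_IZR, mult_IZR; reflexivity.
Qed.

Lemma num_prev_S n : num_prev (S n) = num n.
Proof. unfold num, num_prev, cf_num; simpl; destruct (cf_num_pair n); reflexivity. Qed.

Lemma den_S n : den (S n) = IZR (cf_quot (S n)) * den n + den_prev n.
Proof.
  unfold den, den_prev; simpl.
  destruct (cf_den_pair n); simpl; rewrite plus_IZR, mult_IZR; reflexivity.
Qed.

Lemma den_prev_S n : den_prev (S n) = den n.
Proof. unfold den, den_prev; simpl; destruct (cf_den_pair n); reflexivity. Qed.

Lemma a_eq_convergent_quotient n :
  a * (den n * cf_rem (S n) + den_prev n) = num n * cf_rem (S n) + num_prev n.
Proof.
  induction n as [|n IH].
  - pose proof (cf_frac_bounds 0).
    unfold num, num_prev, den, den_prev, cf_num; simpl.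
    unfold cf_quot in *; simpl in *.
    field; lra.
  - pose proof (cf_frac_bounds (S n)).
    rewrite num_S, num_prev_S, den_S, den_prev_S.
    change (cf_rem (S (S n))) with (/ (cf_rem (S n) - IZR (cf_quot (S n)))).
    set (x := cf_rem (S n)) in *; set (c := IZR (cf_quot (S n))) in *.
    replace (a * ((c * den n + den_prev n) * / (x - c) + den n))
      with (a * (den n * x + den_prev n) / (x - c)) by (field; lra).
    rewrite IH; field; lra.
Qed.

Lemma convergent_det n : num n * den_prev n - num_prev n * den n = (-1) ^ S n.
Proof.
  induction n as [|n IH].
  - unfold num, num_prev, den, den_prev; simpl; ring.
  - rewrite num_S, num_prev_S, den_S, den_prev_S.
    change ((-1) ^ S (S n)) with (-1 * (-1) ^ S n); rewrite <- IH; ring.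
Qed.

Lemma convergent_error n :
  (a * den n - num n) * (den n * cf_rem (S n) + den_prev n) = (-1) ^ n.
Proof.
  transitivity (den n * (a * (den n * cf_rem (S n) + den_prev n))
                - num n * (den n * cf_rem (S n) + den_prev n)); [ring|].
  rewrite a_eq_convergent_quotient.
  transitivity (- (num n * den_prev n - num_prev n * den n)); [ring|].
  rewrite convergent_det; simpl; ring.
Qed.

Lemma den_growth n : 1 <= den n /\ 0 <= den_prev n /\ INR n + 1 <= den n + den_prev n.
Proof.
  induction n as [|n IH].
  - unfold den, den_prev; simpl; lra.
  - rewrite den_S, den_prev_S, S_INR; pose proof (cf_quot_ge_1 n); nra.
Qed.

Lemma den_ge n : INR n <= den n.
Proof.
  destruct n as [|n]; [pose proof (den_growth 0); simpl; lra|].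
  rewrite den_S, S_INR; pose proof (cf_quot_ge_1 n); pose proof (den_growth n); nra.
Qed.

Lemma even_convergent_error n :
  Nat.Even n -> 0 < a * den n - num n /\ (a * den n - num n) * den n < 1.
Proof.
  intros [k ->]; pose proof (convergent_error (2 * k)) as E.
  rewrite pow_1_even in E.
  set (e := a * den (2 * k) - num (2 * k)) in *.
  set (D := den (2 * k) * cf_rem (S (2 * k)) + den_prev (2 * k)) in *.
  assert (HD : den (2 * k) < D).
  { pose proof (cf_rem_gt_1 (2 * k)); pose proof (den_growth (2 * k)); unfold D; nra. }
  assert (He : 0 < e) by (pose proof (den_growth (2 * k)); nra).
  split; [exact He | nra].
Qed.

Lemma even_num_gt n : Nat.Even n -> 0 < num n /\ INR n - 1 < num n.
Proof.
  intros Hn; pose proof (even_convergent_error n Hn) as [He0 He1].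
  pose proof (den_growth n) as [Hq _]; pose proof (den_ge n); pose proof a_gt_1.
  assert (a * den n - num n < 1) by nra.
  split; nra.
Qed.

Lemma INR_to_nat_cf_num n : 0 < num n -> INR (Z.to_nat (cf_num n)) = num n.
Proof.
  intros Hp; apply lt_IZR in Hp.
  rewrite INR_IZR_INZ, Z2Nat.id by lia; reflexivity.
Qed.

Lemma even_convergent_rK n :
  Nat.Even n -> rK (Z.to_nat (cf_num n)) = 1 - (a * den n - num n) / a.
Proof.
  intros Hn; pose proof (even_convergent_error n Hn) as [He0 He1].
  pose proof (den_growth n) as [Hq _]; pose proof a_gt_1.
  assert (Hea : 0 < (a * den n - num n) / a < 1).
  { split; [apply Rdiv_lt_0_compat; lra|].
    apply (Rmult_lt_reg_r a); [lra|]; unfold Rdiv; rewrite Rmult_assoc, Rinv_l; nra. }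
  (* K/a = (q_n - 1) + (1 - (a q_n - p_n)/a) with the second summand in (0, 1). *)
  unfold rK; rewrite INR_to_nat_cf_num by (apply (even_num_gt n Hn)).
  symmetry; apply (Int_part_frac_part_spec _ (fst (cf_den_pair n) - 1)%Z); [lra|].
  rewrite minus_IZR; fold (den n); field; lra.
Qed.

Lemma MaxRlist_eq (l : list R) (y : R) :
  In y l -> (forall z, In z l -> z <= y) -> MaxRlist l = y.
Proof.
  intros Hy Hle; apply Rle_antisym; [|exact (MaxRlist_P1 l y Hy)].
  apply Hle, MaxRlist_P2; exists y; exact Hy.
Qed.

Lemma MinRlist_In (l : list R) : l <> nil -> In (MinRlist l) l.
Proof.
  induction l as [|x [|y l] IH]; intros Hl; [congruence | left; reflexivity|].
  change (MinRlist (x :: y :: l)) with (Rmin x (MinRlist (y :: l))).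
  unfold Rmin; destruct (Rle_dec x (MinRlist (y :: l))); [left; reflexivity|].
  right; apply IH; discriminate.
Qed.

Lemma MinRlist_eq (l : list R) (y : R) :
  In y l -> (forall z, In z l -> y <= z) -> MinRlist l = y.
Proof.
  intros Hy Hle; apply Rle_antisym; [exact (MinRlist_P1 l y Hy)|].
  apply Hle, MinRlist_In; intros ->; exact Hy.
Qed.

Lemma g_of_gt K l :
  INR K / a < INR l -> g K l = a - INR K / INR l /\ 0 < g K l.
Proof.
  intros Hl; pose proof a_gt_1; pose proof (pos_INR K).
  assert (0 <= INR K / a) by (unfold Rdiv; apply Rle_mult_inv_pos; lra).
  assert (Hpos : 0 < a - INR K / INR l).
  { replace (a - INR K / INR l) with (a * (INR l - INR K / a) / INR l) by (field; lra).
    apply Rdiv_lt_0_compat; [apply Rmult_lt_0_compat|]; lra. }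
  assert (E : g K l = a - INR K / INR l) by (apply Rmax_right; lra).
  rewrite E; split; [reflexivity | exact Hpos].
Qed.

Lemma g_of_le K l : (1 <= l)%nat -> INR l <= INR K / a -> g K l = 0.
Proof.
  intros Hl Hle; pose proof a_gt_1.
  assert (0 < INR l) by (apply lt_0_INR; lia).
  assert (EK : INR K = a * (INR K / a)) by (field; lra).
  apply Rmax_left, (Rmult_le_reg_r (INR l)); [lra|].
  replace ((a - INR K / INR l) * INR l) with (a * INR l - INR K) by (field; lra).
  nra.
Qed.

Lemma flr_nonneg K : (0 <= flr K)%Z.
Proof.
  pose proof (base_Int_part (INR K / a)) as [_ H]; pose proof a_gt_1.
  assert (0 <= INR K / a) by (unfold Rdiv; apply Rle_mult_inv_pos; [apply pos_INR | lra]).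
  cut (-1 < flr K)%Z; [lia|]; apply lt_IZR; unfold flr; lra.
Qed.

Lemma INR_lstar K : INR (lstar K) = IZR (flr K) + 1.
Proof.
  unfold lstar; rewrite plus_INR, INR_IZR_INZ, Z2Nat.id by apply flr_nonneg.
  reflexivity.
Qed.

Lemma lstar_le_iff K l : (lstar K <= l)%nat <-> INR K / a < INR l.
Proof.
  pose proof (base_Int_part (INR K / a)) as [H1 H2]; fold (flr K) in H1, H2.
  pose proof (flr_nonneg K).
  unfold lstar; rewrite (INR_IZR_INZ l); split; intros Hl.
  - assert (Hz : (flr K + 1 <= Z.of_nat l)%Z) by lia.
    apply IZR_le in Hz; rewrite plus_IZR in Hz; lra.
  - cut (flr K < Z.of_nat l)%Z; [lia|]; apply lt_IZR; lra.
Qed.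

Lemma In_Splus K l : In l (Splus K) <-> (lstar K <= l <= K)%nat.
Proof.
  unfold Splus; rewrite filter_In, in_seq, lstar_le_iff.
  assert (Hlstar : (1 <= lstar K)%nat) by (unfold lstar; lia).
  destruct (Rlt_dec 0 (g K l)) as [Hg|Hg]; split; intros [Hl Hx].
  - split; [|lia].
    destruct (Rlt_le_dec (INR K / a) (INR l)) as [|Hle]; [assumption|].
    rewrite (g_of_le K l) in Hg by (lia || exact Hle); lra.
  - split; [|reflexivity]; apply lstar_le_iff in Hl; lia.
  - discriminate.
  - exfalso; exact (Hg (proj2 (g_of_gt K l Hl))).
Qed.

Section FixedK.

Variable K : nat.
Hypothesis K_ge_1 : (1 <= K)%nat.

Lemma lstar_le_K : (lstar K <= K)%nat.
Proof.
  apply lstar_le_iff; pose proof a_gt_1.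
  assert (1 <= INR K) by (apply (le_INR 1); exact K_ge_1).
  apply (Rmult_lt_reg_r a); [lra|]; unfold Rdiv; rewrite Rmult_assoc, Rinv_l; nra.
Qed.

Lemma K_in_Splus : In K (Splus K).
Proof. apply In_Splus; pose proof lstar_le_K; lia. Qed.

Lemma lstar_in_Splus : In (lstar K) (Splus K).
Proof. apply In_Splus; pose proof lstar_le_K; lia. Qed.

Lemma g_on_Splus l : In l (Splus K) -> g K l = a - INR K / INR l.
Proof. intros Hl%In_Splus; apply (g_of_gt K l), lstar_le_iff; lia. Qed.

Lemma g_K_K : g K K = a - 1.
Proof.
  rewrite (g_on_Splus K K_in_Splus); assert (0 < INR K) by (apply lt_0_INR; lia).
  field; lra.
Qed.

Lemma gmax_eq : gmax K = a - 1.
Proof.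
  apply MaxRlist_eq; [rewrite <- g_K_K; exact (in_map _ _ _ K_in_Splus)|].
  intros z [l [<- Hl]]%in_map_iff; rewrite (g_on_Splus l Hl), <- g_K_K, (g_on_Splus K K_in_Splus).
  apply In_Splus in Hl; assert (0 < INR l) by (apply lt_0_INR; unfold lstar in Hl; lia).
  assert (INR l <= INR K) by (apply le_INR; lia).
  apply Rplus_le_compat_l, Ropp_le_contravar; unfold Rdiv.
  apply Rmult_le_compat_l; [apply pos_INR | apply Rinv_le_contravar; lra].
Qed.

Lemma gmin_eq : gmin K = a - INR K / INR (lstar K).
Proof.
  rewrite <- (g_on_Splus _ lstar_in_Splus).
  apply MinRlist_eq; [exact (in_map _ _ _ lstar_in_Splus)|].
  intros z [l [<- Hl]]%in_map_iff; rewrite (g_on_Splus l Hl), (g_on_Splus _ lstar_in_Splus).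
  apply In_Splus in Hl; assert (0 < INR (lstar K)) by (apply lt_0_INR; unfold lstar; lia).
  assert (INR (lstar K) <= INR l) by (apply le_INR; lia).
  apply Rplus_le_compat_l, Ropp_le_contravar; unfold Rdiv.
  apply Rmult_le_compat_l; [apply pos_INR | apply Rinv_le_contravar; lra].
Qed.

Lemma rK_pos : 0 < rK K.
Proof.
  pose proof (base_fp (INR K / a)) as [[H|H] _]; [exact H|].
  assert (HK : a * IZR (flr K) = INR K).
  { unfold frac_part in H; unfold flr; pose proof a_gt_1.
    replace (IZR (Int_part (INR K / a))) with (INR K / a) by lra; field; lra. }
  exfalso; apply (irrational_a (Z.of_nat K) (flr K)); [|rewrite <- INR_IZR_INZ; exact HK].
  intros E; rewrite E, Rmult_0_r in HK.
  assert (0 < INR K) by (apply lt_0_INR; lia); lra.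
Qed.

Lemma Theta_eq : Theta K = (a - 1) / a * ((IZR (flr K) + 1) / (1 - rK K)).
Proof.
  pose proof (base_Int_part (INR K / a)) as [_ H]; pose proof a_gt_1.
  pose proof (flr_nonneg K) as HF%IZR_le.
  assert (EK : INR K = a * (INR K / a)) by (field; lra).
  unfold Theta; rewrite gmax_eq, gmin_eq, INR_lstar.
  unfold rK, frac_part, flr in *; field; repeat split; nra.
Qed.

Lemma Theta_gt_linear : (a - 1) / (a * a) * INR K < Theta K.
Proof.
  pose proof (base_Int_part (INR K / a)) as [_ H]; fold (flr K) in H.
  pose proof rK_pos; pose proof (base_fp (INR K / a)) as [_ Hr]; fold (rK K) in Hr.
  pose proof a_gt_1; pose proof (flr_nonneg K) as HF%IZR_le.
  assert (Hdiv : IZR (flr K) + 1 <= (IZR (flr K) + 1) / (1 - rK K)).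
  { apply (Rmult_le_reg_r (1 - rK K)); [lra|].
    unfold Rdiv; rewrite Rmult_assoc, Rinv_l by lra; nra. }
  rewrite Theta_eq.
  replace ((a - 1) / (a * a) * INR K) with ((a - 1) / a * (INR K / a)) by (field; lra).
  apply Rmult_lt_compat_l; [apply Rdiv_lt_0_compat|]; lra.
Qed.

End FixedK.

Lemma even_2n_2 n : Nat.Even (2 * n + 2).
Proof. exists (S n); lia. Qed.

Lemma rK_even_convergent_dist n :
  Rabs (rK (Z.to_nat (cf_num (2 * n + 2))) - 1) <= / INR (S n).
Proof.
  set (m := (2 * n + 2)%nat).
  pose proof (even_convergent_error m (even_2n_2 n)) as [He0 He1].
  rewrite (even_convergent_rK m (even_2n_2 n)).
  pose proof a_gt_1; pose proof (den_ge m).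
  assert (Hm : INR (S n) <= INR m) by (apply le_INR; unfold m; lia).
  assert (0 < INR (S n)) by (apply lt_0_INR; lia).
  assert (He : a * den m - num m <= / INR (S n)).
  { apply (Rmult_le_reg_r (INR (S n))); [lra|]; rewrite Rinv_l by lra; nra. }
  assert (Hea : (a * den m - num m) / a < a * den m - num m).
  { apply (Rmult_lt_reg_r a); [lra|]; unfold Rdiv; rewrite Rmult_assoc, Rinv_l; nra. }
  assert (0 < (a * den m - num m) / a) by (apply Rdiv_lt_0_compat; lra).
  replace (1 - (a * den m - num m) / a - 1) with (- ((a * den m - num m) / a)) by ring.
  rewrite Rabs_Ropp, Rabs_pos_eq; lra.
Qed.

Lemma Theta_even_convergent_ge n :
  (a - 1) / (a * a) * INR n <= Theta (Z.to_nat (cf_num (2 * n + 2))).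
Proof.
  set (m := (2 * n + 2)%nat).
  pose proof (even_num_gt m (even_2n_2 n)) as [Hp Hn].
  pose proof (INR_to_nat_cf_num m Hp) as HK.
  assert (INR m = 2 * INR n + 2) by (unfold m; rewrite plus_INR, mult_INR; simpl; ring).
  assert (HK1 : (1 <= Z.to_nat (cf_num m))%nat).
  { apply INR_le; rewrite HK; simpl; pose proof (pos_INR n); lra. }
  pose proof (Theta_gt_linear _ HK1); pose proof a_gt_1; pose proof (pos_INR n).
  assert (0 < (a - 1) / (a * a)) by (apply Rdiv_lt_0_compat; nra).
  rewrite HK in *; nra.
Qed.

Lemma cv_infty_of_linear_lower_bound (u : nat -> R) (c : R) :
  0 < c -> (forall n, c * INR n <= u n) -> cv_infty u.
Proof.
  intros Hc Hu M; destruct (INR_unbounded (M / c)) as [N HN]; exists N.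
  intros n Hn; apply le_INR in Hn; specialize (Hu n).
  assert (M = c * (M / c)) by (field; lra); nra.
Qed.

Lemma Un_cv_of_dist_le_inv (u : nat -> R) (l : R) :
  (forall n, Rabs (u n - l) <= / INR (S n)) -> Un_cv u l.
Proof.
  intros Hu eps Heps; destruct (INR_unbounded (/ eps)) as [N HN]; exists N.
  intros n Hn; apply (Rle_lt_trans _ _ _ (Hu n)).
  assert (HS : INR N < INR (S n)) by (apply lt_INR; lia).
  pose proof (Rinv_0_lt_compat eps Heps).
  rewrite <- (Rinv_inv eps); apply Rinv_lt_contravar; [apply Rmult_lt_0_compat|]; lra.
Qed.

Theorem mainTheorem18 :
  (forall K : nat, (1 <= K)%nat ->
     (* (1) maximum a - 1 attained at l = K *)
     (In K (Splus K) /\ g K K = a - 1 /\ gmax K = a - 1) /\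
     (* (1) minimum a - K / l_*(K) attained at l_*(K) = floor(K/a) + 1 *)
     (In (lstar K) (Splus K) /\ gmin K = a - INR K / INR (lstar K)) /\
     (* (2) K/a = floor(K/a) + r_K with r_K in (0,1), and the formula for Theta_K *)
     (0 < rK K < 1 /\
      Theta K = (a - 1) / a * ((IZR (flr K) + 1) / (1 - rK K)))) /\
  (* (3) (Theta_K) is unbounded *)
  (forall M : R, exists K : nat, (1 <= K)%nat /\ M < Theta K) /\
  (* along K = p_{2n+2} (= 3, 19, 84, 1054, ...): r_K -> 1^- and Theta_K -> oo *)
  (forall n : nat, rK (Z.to_nat (cf_num (2 * n + 2))) < 1) /\
  Un_cv (fun n => rK (Z.to_nat (cf_num (2 * n + 2)))) 1 /\
  cv_infty (fun n => Theta (Z.to_nat (cf_num (2 * n + 2)))).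
Proof.
  assert (Hc : 0 < (a - 1) / (a * a)) by (pose proof a_gt_1; apply Rdiv_lt_0_compat; nra).
  split; [|split; [|split; [|split]]].
  - intros K HK; pose proof (base_fp (INR K / a)) as [_ HrK].
    repeat split; auto using K_in_Splus, g_K_K, gmax_eq, lstar_in_Splus, gmin_eq,
      rK_pos, Theta_eq.
  - assert (Hinf : cv_infty (fun n => Theta (S n))).
    { apply (cv_infty_of_linear_lower_bound _ _ Hc); intros n.
      assert (INR n <= INR (S n)) by (apply le_INR; lia).
      pose proof (Theta_gt_linear (S n) ltac:(lia)); nra. }
    intros M; destruct (Hinf M) as [N HN]; exists (S N); split; [lia | apply HN; lia].
  - intros n; apply base_fp.
  - exact (Un_cv_of_dist_le_inv _ _ rK_even_convergent_dist).
  - exact (cv_infty_of_linear_lower_bound _ _ Hc Theta_even_convergent_ge).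
Qed.
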